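(* For every $x\in\mathbb{R}^n$, $$\|Px\|_q^2\le\|x\|_q^2-\tfrac12D,\qquad\text{where }D=\sum_{i=1}^n\max_{j:\,m_{ij}>0}(x_i-x_j)^2.$$
   Context: Let $M=(m_{ij})$ be a symmetric $n\times n$ nonnegative matrix whose nonzero entries are all at least $1$ and whose diagonal entries are positive. Let $q=M\mathbf 1$ and $P=\mathrm{diag}(q)^{-1}M$. Define $\langle x,y\rangle_q=\sum_iq_ix_iy_i$ and $\|x\|_q^2=\langle x,x\rangle_q$. *)

From mathcomp Require Import all_boot all_order all_algebra.
Set Implicit Arguments. Unset Strict Implicit. Unset Printing Implicit Defensive.
Import Order.TTheory GRing.Theory Num.Theory.
Local Open Scope ring_scope.

Definition qvec (R : realFieldType) (n : nat) (M : 'M[R]_n) : 'cV[R]_n :=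
  M *m const_mx 1.

Definition Pmat (R : realFieldType) (n : nat) (M : 'M[R]_n) : 'M[R]_n :=
  \matrix_(i, j) ((qvec M i 0)^-1 * M i j).

Definition qdot (R : realFieldType) (n : nat) (q x y : 'cV[R]_n) : R :=
  \sum_(i < n) q i 0 * x i 0 * y i 0.

Definition qnorm2 (R : realFieldType) (n : nat) (q x : 'cV[R]_n) : R :=
  qdot q x x.

(* D = sum_i max_{j : m_ij > 0} (x_i - x_j)^2  (the max is over a nonempty
   set of nonnegative reals when the diagonal is positive, so using 0 as the
   neutral element of max is harmless) *)
Definition Dterm (R : realFieldType) (n : nat) (M : 'M[R]_n) (x : 'cV[R]_n) : R :=
  \sum_(i < n) \big[Num.max/0]_(j < n | 0 < M i j) (x i 0 - x j 0) ^+ 2.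

(** Write [y = P x], so that [q_i y_i = sum_j m_ij x_j]. Expanding the squares
    and using the symmetry of [M] gives the exact energy identity
    [||x||_q^2 = ||y||_q^2 + sum_i sum_j m_ij (x_j - y_i)^2].
    In row [i] the weights are at least [1] on the support of [m_i.], and
    [(x_i - x_j)^2 <= 2 (x_i - y_i)^2 + 2 (x_j - y_i)^2], so the inner sum of
    row [i] is at least half of [max_{j : m_ij > 0} (x_i - x_j)^2]. *)

From mathcomp Require Import all_boot all_order all_algebra.
From mathcomp Require Import ring lra.
Set Implicit Arguments. Unset Strict Implicit. Unset Printing Implicit Defensive.
Import Order.TTheory GRing.Theory Num.Theory.
Local Open Scope ring_scope.

Lemma sum_weighted_sqr_dev (R : comPzRingType) (I : finType) (w z : I -> R) (c : R) :
  \sum_j w j * (z j - c) ^+ 2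
  = \sum_j w j * z j ^+ 2 - 2 * c * \sum_j w j * z j + c ^+ 2 * \sum_j w j.
Proof.
rewrite !mulr_sumr -sumrB -big_split /=.
by apply: eq_bigr => j _; ring.
Qed.

Lemma sqrB_le_twice_sqr_dev (R : realFieldType) (a b c : R) :
  (a - b) ^+ 2 <= 2 * ((a - c) ^+ 2 + (b - c) ^+ 2).
Proof. by have := sqr_ge0 (a + b - 2 * c); nra. Qed.

Lemma bigmax_sqr_dev_le (R : realFieldType) (I : finType) (w x : I -> R)
    (i : I) (c : R) :
  (forall j, 0 <= w j) -> (forall j, w j != 0 -> 1 <= w j) -> 0 < w i ->
  \big[Num.max/0]_(j | 0 < w j) (x i - x j) ^+ 2
  <= 2 * \sum_j w j * (x j - c) ^+ 2.
Proof.
move=> w_ge0 w_ge1 wi_gt0.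
have term_ge0 k : 0 <= w k * (x k - c) ^+ 2 by rewrite mulr_ge0 ?sqr_ge0.
have sqr_le_term k : 0 < w k -> (x k - c) ^+ 2 <= w k * (x k - c) ^+ 2.
  by move=> wk_gt0; rewrite ler_peMl ?sqr_ge0 ?w_ge1 ?lt0r_neq0.
apply: (big_ind (fun m => m <= 2 * _)).
- by rewrite mulr_ge0 ?sumr_ge0.
- by move=> a b ha hb; rewrite ge_max ha hb.
move=> j wj_gt0; have [->|nji] := eqVneq j i.
  by rewrite subrr expr0n /= mulr_ge0 ?sumr_ge0.
have two_terms_le : w i * (x i - c) ^+ 2 + w j * (x j - c) ^+ 2
                    <= \sum_k w k * (x k - c) ^+ 2.
  by rewrite (bigD1 i) //= (bigD1 j nji) //= addrA lerDl sumr_ge0.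
have := sqrB_le_twice_sqr_dev (x i) (x j) c.
have := sqr_le_term i wi_gt0; have := sqr_le_term j wj_gt0; lra.
Qed.

Lemma qnorm2E (R : realFieldType) (n : nat) (q x : 'cV[R]_n) :
  qnorm2 q x = \sum_i q i 0 * x i 0 ^+ 2.
Proof. by apply: eq_bigr => i _; rewrite expr2 mulrA. Qed.

Section RowNormalization.

Variables (R : realFieldType) (n : nat) (M : 'M[R]_n).
Hypothesis Mnonneg : forall i j, 0 <= M i j.
Hypothesis Mdiag : forall i, 0 < M i i.

Local Notation q := (qvec M).

Lemma qvecE i : q i 0 = \sum_j M i j.
Proof. by rewrite /qvec mxE; apply: eq_bigr => j _; rewrite mxE mulr1. Qed.

Lemma qvec_gt0 i : 0 < q i 0.
Proof.
rewrite qvecE (bigD1 i) //=; apply: (lt_le_trans (Mdiag i)).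
by rewrite lerDl sumr_ge0.
Qed.

Lemma qvec_mul_Pmat (x : 'cV[R]_n) i :
  q i 0 * (Pmat M *m x) i 0 = \sum_j M i j * x j 0.
Proof.
rewrite [(Pmat M *m x) i 0]mxE mulr_sumr; apply: eq_bigr => j _.
by rewrite [Pmat M i j]mxE -mulrA mulVKf ?lt0r_neq0 ?qvec_gt0.
Qed.

Lemma qnorm2_Pmat_split (x : 'cV[R]_n) : M^T = M ->
  qnorm2 q x = qnorm2 q (Pmat M *m x)
               + \sum_i \sum_j M i j * (x j 0 - (Pmat M *m x) i 0) ^+ 2.
Proof.
move=> Msym; set y := Pmat M *m x.
have row_dev i : \sum_j M i j * (x j 0 - y i 0) ^+ 2
                 = \sum_j M i j * x j 0 ^+ 2 - q i 0 * y i 0 ^+ 2.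
  rewrite sum_weighted_sqr_dev -qvec_mul_Pmat -qvecE; ring.
have col_sum : \sum_i \sum_j M i j * x j 0 ^+ 2 = qnorm2 q x.
  rewrite exchange_big qnorm2E; apply: eq_bigr => j _.
  rewrite qvecE mulr_suml; apply: eq_bigr => i _.
  by rewrite -[in RHS]Msym mxE.
rewrite -col_sum qnorm2E -big_split; apply: eq_bigr => i _.
by rewrite /= row_dev subrKC.
Qed.

End RowNormalization.

Theorem lemma5 (R : realFieldType) (n : nat) (M : 'M[R]_n)
  (Msym : M^T = M)
  (Mnonneg : forall i j, 0 <= M i j)
  (Mge1 : forall i j, M i j != 0 -> 1 <= M i j)
  (Mdiag : forall i, 0 < M i i)
  (x : 'cV[R]_n) :
  qnorm2 (qvec M) (Pmat M *m x) <= qnorm2 (qvec M) x - Dterm M x / 2.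
Proof.
set y := Pmat M *m x.
have D_le : Dterm M x <= 2 * \sum_i \sum_j M i j * (x j 0 - y i 0) ^+ 2.
  rewrite /Dterm mulr_sumr; apply: ler_sum => i _.
  exact: (bigmax_sqr_dev_le (fun j => x j 0) (y i 0) (Mnonneg i) (Mge1 i) (Mdiag i)).
rewrite (qnorm2_Pmat_split Mnonneg Mdiag x Msym) -/y; lra.
Qed.
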